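(* Let $X$ be a uniform space and let $f \colon X \to X$ be a uniformly continuous map. Let $Y$ be a subset of $X$ such that $Y$ and $f(Y)$ are both closed in $X$. Suppose that there is a net $(Z_i)_{i \in I}$ of subsets of $X$ such that $f(Z_i) \subset Z_i$ for all $i \in I$ and $(Z_i)$ converges to $Y$ in the Hausdorff-Bourbaki topology. Then $f(Y) \subset Y$.
   Context: For $V \subset X \times X$ and $A \subset X$, $V[A] = \{x \in X : (x,a) \in V \text{ for some } a \in A\}$. The Hausdorff-Bourbaki uniform structure on the set $\mathcal{P}(X)$ of all subsets of $X$ has as a base the sets $\widehat{V} = \{(A,B) : B \subset V[A] \text{ and } A \subset V[B]\}$, $V$ an entourage of $X$; the Hausdorff-Bourbaki topology is its associated topology. *)

From HB Require Import structures.
From mathcomp Require Import all_boot all_order all_algebra.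
From mathcomp Require Import all_classical all_reals all_analysis.
Set Implicit Arguments. Unset Strict Implicit. Unset Printing Implicit Defensive.
Local Open Scope classical_set_scope.

Definition entourage_image (X : Type) (V : set (X * X)) (A : set X) : set X :=
  [set x | exists2 a, A a & V (x, a)].

Definition hb_entourage (X : Type) (V : set (X * X)) (A B : set X) : Prop :=
  B `<=` entourage_image V A /\ A `<=` entourage_image V B.

Definition directed_set (I : Type) (le : I -> I -> Prop) : Prop :=
  (forall i, le i i) /\
  (forall i j k, le i j -> le j k -> le i k) /\
  (exists i : I, True) /\
  (forall i j, exists k, le i k /\ le j k).

(* The net (Z_i)_{i in I} converges to Y in the Hausdorff-Bourbaki topology:
   every basic neighbourhood {B | (Y,B) in V^} of Y (V an entourage of X)
   eventually contains Z_i. *)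
Definition hb_net_converges (X : uniformType) (I : Type) (le : I -> I -> Prop)
    (Z : I -> set X) (Y : set X) : Prop :=
  forall V : set (X * X), entourage V ->
    exists i0 : I, forall i, le i0 i -> hb_entourage V Y (Z i).

From HB Require Import structures.
From mathcomp Require Import all_boot all_order all_algebra.
From mathcomp Require Import all_classical all_reals all_analysis.
Local Open Scope classical_set_scope.

(* If an f-invariant set Z is Hausdorff-Bourbaki close to Y, every point f y
   with y in Y is close to Y: pick a in Z close to y, so f a is in Z and
   close to f y, and f a is in turn close to some point of Y.  Letting the
   closeness shrink puts f(Y) in the closure of Y, which is Y.  Neither the
   closedness of f(Y) nor the directedness of the index set is needed. *)

Lemma entourage_imageS {X : Type} {V W : set (X * X)} {A : set X} :
  V `<=` W -> entourage_image V A `<=` entourage_image W A.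
Proof. by move=> VW x [a Aa Vxa]; exists a => //; exact: VW. Qed.

Lemma hb_invariant_image_close {X : Type} {f : X -> X} {U : set (X * X)}
    {Y Z : set X} :
  f @` Z `<=` Z ->
  hb_entourage ([set xy : X * X | U (f xy.1, f xy.2)] `&` U) Y Z ->
  f @` Y `<=` entourage_image (U \; U)%relation Y.
Proof.
move=> fZ [ZY YZ] _ [y Yy <-].
have [a Za [Ufyfa _]] := YZ y Yy.
have [b Yb [_ Ufab]] := ZY (f a) (fZ _ (ex_intro2 _ _ a Za erefl)).
by exists b => //; exists (f a).
Qed.

Lemma closure_entourage_image (X : uniformType) (Y : set X) (x : X) :
  (forall W, entourage W -> entourage_image W Y x) -> closure Y x.
Proof.
move=> YW B /nbhsP[W entW WB].
have [b Yb Wxb] := YW W entW.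
by exists b; split => //; apply: WB; rewrite /xsection /= inE.
Qed.

Lemma hb_invariant_image_sub_closure (X : uniformType) (f : X -> X)
    (Y : set X) :
  unif_continuous f ->
  (forall V, entourage V -> exists2 Z, f @` Z `<=` Z & hb_entourage V Y Z) ->
  f @` Y `<=` closure Y.
Proof.
move=> uf YZ x fYx; apply: closure_entourage_image => W entW.
set U := split_ent W.
have entU : entourage U by exact: entourage_split_ent.
have entfU : entourage [set xy : X * X | U (f xy.1, f xy.2)] by exact: uf.
have entV : entourage ([set xy : X * X | U (f xy.1, f xy.2)] `&` U).
  exact: filterI.
have [Z fZ YZV] := YZ _ entV.
apply: (entourage_imageS (subset_split_ent entW)).
exact: (hb_invariant_image_close fZ YZV).
Qed.

Theorem corollary3p6 (X : uniformType) (f : X -> X) (Y : set X)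
    (I : Type) (le : I -> I -> Prop) (Z : I -> set X) :
  unif_continuous f ->
  closed Y -> closed (f @` Y) ->
  directed_set le ->
  (forall i, f @` Z i `<=` Z i) ->
  hb_net_converges le Z Y ->
  f @` Y `<=` Y.
Proof.
move=> uf cY _ [le_refl _] fZ conv.
rewrite {2}(closure_id Y).1 //.
apply: hb_invariant_image_sub_closure uf _ => V entV.
have [i0 Zi0] := conv V entV.
by exists (Z i0); [exact: fZ | exact: Zi0].
Qed.
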